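(* Let $S\subset\mathbb N$ be finite. The following are equivalent: (1) $S$ is not a caterpillar; (2) there is a subset $T\subset S$ whose split is $T=(L,R)$ with $|L|,|R|\geq 2$; (3) there is a subset $T\subset S$ whose split is $T=(L,R)$ with $|L|=|R|=2$. Consequently, every subset of a caterpillar is a caterpillar.
   Context: For $m\in\mathbb N$ let $d(m)$ be the finite set of integers with $m=\sum_{i\in d(m)}2^i$. For a finite $S\subset\mathbb N$ with $|S|\geq2$, its first splitting index is $s(S)=\max\{i:\exists x,y\in S,\ i\in d(x)\setminus d(y)\}$; with $S_0=\{x\in S:s(S)\notin d(x)\}$ and $S_1=\{x\in S:s(S)\in d(x)\}$ (both nonempty), $(S_0,S_1)$ is the split of $S$, written $S=(S_0,S_1)$. Caterpillars are defined recursively: the empty set and all singletons are caterpillars; a finite $S\subset\mathbb N$ with $|S|\geq2$ and split $(S_0,S_1)$ is a caterpillar iff one of $S_0,S_1$ is a singleton and the other is a caterpillar. *)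

From HB Require Import structures.
From mathcomp Require Import all_boot all_order.
From mathcomp Require Import finmap.
Set Implicit Arguments. Unset Strict Implicit. Unset Printing Implicit Defensive.
Local Open Scope fset_scope.

(* i \in d(m): the i-th binary digit of m is 1 *)
Definition bitn (m i : nat) : bool := odd (m %/ 2 ^ i).

Definition separating (S : {fset nat}) (i : nat) : Prop :=
  exists x y, [/\ x \in S, y \in S, bitn x i & ~~ bitn y i].

Definition split_index (S : {fset nat}) (i : nat) : Prop :=
  separating S i /\ forall j, separating S j -> j <= i.

Definition is_split (S L R : {fset nat}) : Prop :=
  2 <= #|` S| /\
  exists i, [/\ split_index S i,
                L = [fset x in S | ~~ bitn x i] &
                R = [fset x in S | bitn x i]].

Inductive caterpillar : {fset nat} -> Prop :=
| cat_empty : caterpillar fset0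
| cat_single x : caterpillar [fset x]
| cat_left S L R : is_split S L R -> #|` L| = 1 -> caterpillar R -> caterpillar S
| cat_right S L R : is_split S L R -> #|` R| = 1 -> caterpillar L -> caterpillar S.

From HB Require Import structures.
From mathcomp Require Import all_boot all_order.
From mathcomp Require Import finmap zify.
Set Implicit Arguments. Unset Strict Implicit. Unset Printing Implicit Defensive.
Local Open Scope fset_scope.

(* Everything is phrased through the two "parts" of a set T at a digit i,
   part T i b = {x in T | the i-th binary digit of x is b}: the split of T is
   (part T i false, part T i true) at its splitting index i, which exists as
   soon as |T| >= 2 (distinct numbers differ in some digit, and only finitely
   many digits are separating) and is unique.
   - Heredity: if i splits S and T ⊆ S, then either one part of T at i is
     empty (so T is a part of itself) or i also splits T, with parts
     contained in those of S; induction on the caterpillar S finishes.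
   - A split with two sides of size >= 2 is not a caterpillar, by uniqueness
     of the split; with heredity this gives (2) => (1).
   - (1) => (2): by strong induction on |S|, the split of a non-caterpillar
     either has two big sides or a singleton side whose complement is a
     smaller non-caterpillar.
   - (2) => (3): choosing two elements in each side A, B of the split, the
     union of these pairs has exactly these pairs as its split. *)

Lemma bitn_half x i : bitn x i.+1 = bitn (x %/ 2) i.
Proof. by rewrite /bitn expnS divnMA. Qed.

Lemma bitn_inj x y : x != y -> exists i, bitn x i != bitn y i.
Proof.
move: {2}(x + y)%N (leqnn (x + y)) => n.
elim: n x y => [|n IH] x y hn /eqP hxy; first by exfalso; lia.
have [hodd|hodd] := eqVneq (odd x) (odd y); last first.
  by exists 0; rewrite /bitn expn0 !divn1.
have hhalf : x %/ 2 != y %/ 2.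
  apply/eqP => e; apply: hxy.
  by rewrite (divn_eq x 2) (divn_eq y 2) e !modn2 hodd.
have [|i hi] := IH (x %/ 2) (y %/ 2) _ hhalf; first by lia.
by exists i.+1; rewrite !bitn_half.
Qed.

(* A number is at least 2 ^ j when its j-th digit is set, so j < x. *)
Lemma bitn_lt x j : bitn x j -> j < x.
Proof.
rewrite /bitn => h.
have : 2 ^ j <= x by rewrite leqNgt; apply/negP => hl; rewrite divn_small in h.
exact: leq_trans (ltn_expl j (ltnSn 1)).
Qed.

Definition separatingb (S : {fset nat}) (i : nat) : bool :=
  has (fun x => bitn x i && has (fun y => ~~ bitn y i) S) S.

Lemma separatingP S i : reflect (separating S i) (separatingb S i).
Proof.
apply: (iffP hasP) => [[x hx /andP [bx /hasP [y hy byi]]]|[x [y [hx hy bx byi]]]].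
  by exists x, y.
by exists x => //; rewrite bx; apply/hasP; exists y.
Qed.

Lemma two_elems (S : {fset nat}) : 2 <= #|` S| ->
  exists x y, [/\ x \in S, y \in S & x != y].
Proof.
move=> h.
have /fset0Pn [x hx] : S != fset0 by rewrite -cardfs_gt0; apply: ltnW.
have /fset0Pn [y] : S `\ x != fset0.
  by rewrite -cardfs_gt0; move: h; rewrite (cardfsD1 x) hx.
by rewrite in_fsetD1 => /andP [hyx hy]; exists x, y; rewrite eq_sym.
Qed.

(* Every set with at least two elements has a splitting index: some digit
   separates two of its elements, and separating digits are bounded by max S. *)
Lemma split_index_exists (S : {fset nat}) : 2 <= #|` S| -> exists i, split_index S i.
Proof.
move=> /two_elems [x [y [hx hy /bitn_inj [i hi]]]].
have sep : exists i, separatingb S i.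
  exists i; apply/separatingP.
  by case bx: (bitn x i) hi => /= hi; [exists x, y | exists y, x];
    rewrite ?bx //; move: hi; case: bitn.
have bound j : separatingb S j -> j <= \max_(z <- S) z.
  move=> /separatingP [z [_ [hz _ bz _]]].
  exact: leq_trans (ltnW (bitn_lt bz)) (leq_bigmax_seq _ hz erefl).
case: (ex_maxnP sep bound) => m /separatingP hm hmax.
by exists m; split => // j /separatingP; apply: hmax.
Qed.

Lemma split_index_unique S i j : split_index S i -> split_index S j -> i = j.
Proof. by move=> [hi mi] [hj mj]; apply/eqP; rewrite eqn_leq mi // mj. Qed.

Definition part (T : {fset nat}) (i : nat) (b : bool) : {fset nat} :=
  [fset x in T | bitn x i == b].

Lemma part_sub T i b : part T i b `<=` T.
Proof. by apply/fsubsetP => x; rewrite !inE => /andP []. Qed.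

Lemma partS S T i b : T `<=` S -> part T i b `<=` part S i b.
Proof.
move=> sub; apply/fsubsetP => x; rewrite !inE => /andP [hx ->].
by rewrite (fsubsetP sub x hx).
Qed.

Lemma card_parts T i b : (#|` part T i b| + #|` part T i (~~ b)|)%N = #|` T|.
Proof.
rewrite -cardfsUI.
have -> : part T i b `|` part T i (~~ b) = T.
  by apply/fsetP => x; rewrite !inE; case: (x \in T); case: bitn; case: b.
have -> : part T i b `&` part T i (~~ b) = fset0.
  by apply/fsetP => x; rewrite !inE; case: (x \in T); case: bitn; case: b.
by rewrite cardfs0 addn0.
Qed.

Lemma part_full T i b : part T i b = fset0 -> T = part T i (~~ b).
Proof.
move=> e; apply/fsetP => x; rewrite !inE.
case hx: (x \in T) => //=.
have : x \notin part T i b by rewrite e inE.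
by rewrite !inE hx; case: b {e}; case: bitn.
Qed.

Lemma is_splitE T L R : is_split T L R <->
  exists i, [/\ split_index T i, L = part T i false & R = part T i true].
Proof.
have partF i : part T i false = [fset x in T | ~~ bitn x i].
  by apply/fsetP => x; rewrite !inE eqbF_neg.
have partT i : part T i true = [fset x in T | bitn x i].
  by apply/fsetP => x; rewrite !inE eqb_id.
split=> [[_ [i [si -> ->]]]|[i [si -> ->]]].
  by exists i; rewrite partF partT.
have [[x [y [hx hy bx byi]]] _] := si.
have xy : x != y by apply: contraNneq byi => <-.
split; last by exists i; rewrite partF partT.
apply: leq_trans (fsubset_leq_card (_ : [fset x; y] `<=` T)); first by rewrite cardfs2 xy.
by apply/fsubsetP => z; rewrite !inE => /orP [] /eqP ->.
Qed.

Lemma is_split_unique T L R L' R' :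
  is_split T L R -> is_split T L' R' -> L = L' /\ R = R'.
Proof.
move=> /is_splitE [i [si -> ->]] /is_splitE [j [sj -> ->]].
by rewrite (split_index_unique si sj).
Qed.

Lemma part_nonempty T i b : split_index T i -> part T i b != fset0.
Proof.
move=> [[x [y [hx hy bx byi]]] _]; apply/fset0Pn.
by case: b; [exists x | exists y]; rewrite !inE ?hx ?hy ?bx ?(negbTE byi).
Qed.

Lemma split_index_sub S T i b : split_index S i -> T `<=` S ->
  part T i b != fset0 -> part T i (~~ b) != fset0 -> split_index T i.
Proof.
move=> [_ maxi] sub /fset0Pn [x] /[!inE] /andP [hx /eqP bx]
  /fset0Pn [y] /[!inE] /andP [hy /eqP byi].
split=> [|j [u [v [hu hv buv nbv]]]]; last first.
  by apply: maxi; exists u, v; split=> //; apply: (fsubsetP sub).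
by case: b bx byi => bx byi; [exists x, y | exists y, x]; rewrite ?bx ?byi.
Qed.

Lemma cat_small (T : {fset nat}) : #|` T| <= 1 -> caterpillar T.
Proof.
rewrite leq_eqVlt ltnS leqn0 => /orP [/cardfs1P [x ->]|/eqP/cardfs0_eq ->].
  exact: cat_single.
exact: cat_empty.
Qed.

(* A set whose split has a singleton side b and a caterpillar side ~~ b is a
   caterpillar; this covers both recursive constructors at once. *)
Lemma caterpillar_of_parts T i b : split_index T i ->
  #|` part T i b| = 1 -> caterpillar (part T i (~~ b)) -> caterpillar T.
Proof.
move=> si h1 hc.
have hs : is_split T (part T i false) (part T i true) by apply/is_splitE; exists i.
by case: b h1 hc => h1 hc; [apply: cat_right hs h1 hc | apply: cat_left hs h1 hc].
Qed.

Lemma caterpillar_restrict S T i b : split_index S i -> T `<=` S ->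
  #|` part T i b| <= 1 -> caterpillar (part T i (~~ b)) -> caterpillar T.
Proof.
move=> si sub hb hc.
have [e|ne] := eqVneq (part T i b) fset0; first by rewrite (part_full e).
have [e'|ne'] := eqVneq (part T i (~~ b)) fset0.
  by rewrite (part_full e') negbK; apply: cat_small.
apply: (caterpillar_of_parts (split_index_sub si sub ne ne')) hc.
by apply/eqP; rewrite eqn_leq hb cardfs_gt0.
Qed.

Lemma caterpillar_sub S : caterpillar S -> forall T, T `<=` S -> caterpillar T.
Proof.
elim=> {S} [|x|S L R hs hL _ IH|S L R hs hR _ IH] T sub.
- by apply: cat_small; move: (fsubset_leq_card sub); rewrite cardfs0; lia.
- by apply: cat_small; move: (fsubset_leq_card sub); rewrite cardfs1.
- have /is_splitE [i [si eL eR]] := hs.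
  apply: (caterpillar_restrict (b := false) si sub); last first.
    by apply: IH; rewrite eR; apply: partS.
  by rewrite -hL eL; apply/fsubset_leq_card/partS.
- have /is_splitE [i [si eL eR]] := hs.
  apply: (caterpillar_restrict (b := true) si sub); last first.
    by apply: IH; rewrite eL; apply: partS.
  by rewrite -hR eR; apply/fsubset_leq_card/partS.
Qed.

(* A split with two sides of size at least 2 is not a caterpillar: the split
   is unique, so neither recursive constructor applies. *)
Lemma not_caterpillar_big_split T L R :
  is_split T L R -> 2 <= #|` L| -> 2 <= #|` R| -> ~ caterpillar T.
Proof.
move=> hs hL hR hc; case: T / hc hs.
- by move=> [h _]; rewrite cardfs0 in h.
- by move=> x [h _]; rewrite cardfs1 in h.
- by move=> T L' R' hs' h1 _ /is_split_unique/(_ hs') [e _]; rewrite e h1 in hL.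
- by move=> T L' R' hs' h1 _ /is_split_unique/(_ hs') [_ e]; rewrite e h1 in hR.
Qed.

Lemma big_split_of_not_caterpillar S : ~ caterpillar S ->
  exists T L R, [/\ T `<=` S, is_split T L R, 2 <= #|` L| & 2 <= #|` R|].
Proof.
move: {2}#|` S| (leqnn #|` S|) => n; elim: n S => [|n IH] S hn hc.
  by case: hc; apply: cat_small; lia.
have [small|two] := leqP #|` S| 1; first by case: hc; apply: cat_small.
have [i si] := split_index_exists two.
have [big|] := boolP ((2 <= #|` part S i false|) && (2 <= #|` part S i true|)).
  case/andP: big => hF hT; exists S, (part S i false), (part S i true).
  by split=> //; apply/is_splitE; exists i.
rewrite negb_and -!ltnNge !ltnS => hsmall.
have [b hb] : exists b, #|` part S i b| <= 1.
  by case/orP: hsmall; [exists false | exists true].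
have h1 : #|` part S i b| = 1.
  by apply/eqP; rewrite eqn_leq hb cardfs_gt0 part_nonempty.
have hc' : ~ caterpillar (part S i (~~ b)) by move/(caterpillar_of_parts si h1).
have [|T [L [R [sub hs hL hR]]]] := IH _ _ hc'.
  by move: (card_parts S i b); rewrite h1; lia.
by exists T, L, R; split=> //; apply: fsubset_trans sub (part_sub _ _ _).
Qed.

Lemma split_union T L R A B : is_split T L R -> A `<=` L -> B `<=` R ->
  A != fset0 -> B != fset0 -> A `|` B `<=` T /\ is_split (A `|` B) A B.
Proof.
move=> /is_splitE [i [si -> ->]] sA sB nA nB.
have bitA x : x \in A -> bitn x i = false.
  by move=> /(fsubsetP sA); rewrite !inE => /andP [_ /eqP].
have bitB x : x \in B -> bitn x i = true.
  by move=> /(fsubsetP sB); rewrite !inE => /andP [_ /eqP].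
have partAB b : part (A `|` B) i b = if b then B else A.
  apply/fsetP => x; rewrite !inE.
  have [hA|hA] := boolP (x \in A).
    have hBx : x \notin B by apply/negP => /bitB; rewrite bitA.
    by rewrite bitA //; case: b; rewrite /= ?hA ?(negbTE hBx).
  have [hB|hB] := boolP (x \in B).
    by rewrite bitB //; case: b; rewrite /= ?hB ?(negbTE hA).
  by case: b; rewrite /= ?(negbTE hA) ?(negbTE hB).
have sub : A `|` B `<=` T.
  by rewrite fsubUset; apply/andP; split;
    [apply: fsubset_trans sA _ | apply: fsubset_trans sB _]; apply: part_sub.
split=> //; apply/is_splitE; exists i; rewrite !partAB; split=> //.
by apply: (split_index_sub (b := false) si sub); rewrite partAB.
Qed.

Lemma pair_split_of_big_split T L R :
  is_split T L R -> 2 <= #|` L| -> 2 <= #|` R| ->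
  exists T' L' R', [/\ T' `<=` T, is_split T' L' R', #|` L'| = 2 & #|` R'| = 2].
Proof.
move=> hs /two_elems [a [b [ha hb ab]]] /two_elems [c [d [hc hd cd]]].
have pair_sub (X : {fset nat}) x y : x \in X -> y \in X -> [fset x; y] `<=` X.
  by move=> hx hy; apply/fsubsetP => z; rewrite !inE => /orP [] /eqP ->.
have pair_nonempty x y : [fset x; y] != fset0 :> {fset nat}.
  by apply/fset0Pn; exists x; rewrite !inE eqxx.
have [sub hs'] := split_union hs (pair_sub _ _ _ ha hb) (pair_sub _ _ _ hc hd)
  (pair_nonempty a b) (pair_nonempty c d).
exists ([fset a; b] `|` [fset c; d]), [fset a; b], [fset c; d].
by rewrite !cardfs2 ab cd.
Qed.

Theorem mainTheorem4 :
  (forall S : {fset nat},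
    (~ caterpillar S <->
       exists T L R, [/\ T `<=` S, is_split T L R, 2 <= #|` L| & 2 <= #|` R|]) /\
    ((exists T L R, [/\ T `<=` S, is_split T L R, 2 <= #|` L| & 2 <= #|` R|]) <->
       exists T L R, [/\ T `<=` S, is_split T L R, #|` L| = 2 & #|` R| = 2])) /\
  (forall S T : {fset nat}, caterpillar S -> T `<=` S -> caterpillar T).
Proof.
split; last by move=> S T hS; apply: caterpillar_sub.
move=> S; split; split.
- exact: big_split_of_not_caterpillar.
- move=> [T [L [R [sub hs hL hR]]]] hc.
  exact: not_caterpillar_big_split hs hL hR (caterpillar_sub hc sub).
- move=> [T [L [R [sub hs hL hR]]]].
  have [T' [L' [R' [sub' hs' hL' hR']]]] := pair_split_of_big_split hs hL hR.
  by exists T', L', R'; split=> //; apply: fsubset_trans sub' sub.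
- move=> [T [L [R [sub hs hL hR]]]].
  by exists T, L, R; rewrite hL hR.
Qed.
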